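(* For all formulas $p,q,r,t\in F(V)$ the following hold in the logic $\mathrm{sq}\L^*$ (where $\vdash$ denotes $\vdash_{\mathrm{sq}\L^*}$): (1) if $\vdash p\leftrightarrow q$, then $\vdash\neg p\leftrightarrow\neg q$; (2) if $\vdash p\leftrightarrow q$ and $\vdash r\leftrightarrow t$, then $\vdash(p\to r)\leftrightarrow(q\to t)$; (3) if $\vdash p\leftrightarrow q$ and $\vdash q\leftrightarrow r$, then $\vdash p\leftrightarrow r$; (4) $\vdash\neg(p\to q)\leftrightarrow(\neg p\to\neg q)$; (5) $\vdash p\to p$; (6) if $\vdash p_1\leftrightarrow r_1$, then $\vdash p\leftrightarrow r$, where $p_1$ is a subformula of $p$ and $r$ is obtained by replacing $p_1$ in $p$ with $r_1$; (7) $\vdash(p\to p)\leftrightarrow(q\to q)$; (8) $\vdash p\leftrightarrow\neg\neg p$; (9) $\vdash(\neg p\to q)\leftrightarrow(\neg q\to p)$; (10) $\vdash(\neg p)^+\leftrightarrow\neg p^-$ and $\vdash(\neg p)^-\leftrightarrow\neg p^+$; (11) $\vdash(p\vee q)\leftrightarrow(q\vee p)$.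
   Context: Let $V$ be a set of propositional variables and $F(V)$ the set of formulas built from $V$ and the constant $1$ using the binary connective $\to$ and the unary connective $\neg$ ($\neg$ binds more tightly than $\to$). Abbreviations: $p^+:=(p\to 1)\to 1$, $p^-:=(p\to\neg 1)\to\neg 1$ (these bind more tightly than $\neg$, so $\neg p^-$ is $\neg(p^-)$), $p\vee q:=((p^+\to q^+)^+\to(\neg p)^-)\to((q^-\to p^-)^-\to p^-)$; ''$p\leftrightarrow q$'' stands for the two formulas $p\to q$ and $q\to p$, so an axiom $p\leftrightarrow q$ means both are axioms and $\vdash p\leftrightarrow q$ means both are derivable. The logic $\mathrm{sq}\L^*$ has axiom schemas (for all $p,q,r\in F(V)$): (Q1) $(p\to q)\leftrightarrow(\neg q\to\neg p)$; (Q2) $1\leftrightarrow((1\to p)\to 1)$; (Q3) $p\leftrightarrow((q\to q)\to p)$; (Q4) $(p\to q)\leftrightarrow((q^+\to p^-)\to(p^+\to q^-))$; (Q5) $\neg(p\to q)\leftrightarrow(q\to p)$; (Q6) $(p\to(\neg p\to q))^+\leftrightarrow(p^+\to(\neg p^+\to q^+))$; (Q7) $(p\to(q\vee r))\leftrightarrow((p\to r)\vee(p\to q))$; (Q8) $(p\vee(q\vee r))\leftrightarrow((p\vee q)\vee r)$; (Q9) $((p\to 1)\to((q\to 1)\to r))\to((q\to 1)\to((p\to 1)\to r))$; (Q10) $p\to 1$; and rules (for all $p,q,r,t$): (qMP) from $(r\to r)\to p$ and $(r\to r)\to(p\to q)$ infer $(r\to r)\to q$; (Reg) from $p$ infer $(r\to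 r)\to p$; (AReg1) from $(r\to r)\to(p\to q)$ infer $p\to q$; (AReg2) from $(r\to r)\to\neg(p\to q)$ infer $\neg(p\to q)$; (AReg3) from $(r\to r)\to\neg 1$ infer $\neg 1$; (AReg4) from $(r\to r)\to 1$ infer $1$; (Inv1) from $p$ infer $\neg\neg p$; (Inv2) from $\neg\neg p$ infer $p$; (Flat) from $p$ and $\neg 1$ infer $\neg p$; (R2$'$) from $p\to q$ and $r\to t$ infer $(q\to r)\to(p\to t)$; (R3$'$) from $(r\to r)\to p$ infer $p^-$. $\vdash_{\mathrm{sq}\L^*}q$ means there is a finite sequence of formulas ending with $q$ in which each member is an axiom instance or follows from earlier members by a rule. *)

Inductive form (V : Type) : Type :=
| Var : V -> form V
| One : form V
| Imp : form V -> form V -> form V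
| Neg : form V -> form V.

Arguments Var {V} _.
Arguments One {V}.
Arguments Imp {V} _ _.
Arguments Neg {V} _.

Section Sq.
Variable V : Type.
Notation F := (form V).

Definition plus (p : F) : F := Imp (Imp p One) One.
Definition minus (p : F) : F := Imp (Imp p (Neg One)) (Neg One).

Definition disj (p q : F) : F :=
  Imp (Imp (plus (Imp (plus p) (plus q))) (minus (Neg p)))
      (Imp (minus (Imp (minus q) (minus p))) (minus p)).

(* Axioms of sqL*; each "a <-> b" schema contributes a -> b and b -> a. *)
Inductive axiom : F -> Prop :=
| Q1a p q : axiom (Imp (Imp p q) (Imp (Neg q) (Neg p)))
| Q1b p q : axiom (Imp (Imp (Neg q) (Neg p)) (Imp p q))
| Q2a p : axiom (Imp One (Imp (Imp One p) One))
| Q2b p : axiom (Imp (Imp (Imp One p) One) One)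
| Q3a p q : axiom (Imp p (Imp (Imp q q) p))
| Q3b p q : axiom (Imp (Imp (Imp q q) p) p)
| Q4a p q : axiom (Imp (Imp p q) (Imp (Imp (plus q) (minus p)) (Imp (plus p) (minus q))))
| Q4b p q : axiom (Imp (Imp (Imp (plus q) (minus p)) (Imp (plus p) (minus q))) (Imp p q))
| Q5a p q : axiom (Imp (Neg (Imp p q)) (Imp q p))
| Q5b p q : axiom (Imp (Imp q p) (Neg (Imp p q)))
| Q6a p q : axiom (Imp (plus (Imp p (Imp (Neg p) q)))
                       (Imp (plus p) (Imp (Neg (plus p)) (plus q))))
| Q6b p q : axiom (Imp (Imp (plus p) (Imp (Neg (plus p)) (plus q)))
                       (plus (Imp p (Imp (Neg p) q))))
| Q7a p q r : axiom (Imp (Imp p (disj q r)) (disj (Imp p r) (Imp p q)))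
| Q7b p q r : axiom (Imp (disj (Imp p r) (Imp p q)) (Imp p (disj q r)))
| Q8a p q r : axiom (Imp (disj p (disj q r)) (disj (disj p q) r))
| Q8b p q r : axiom (Imp (disj (disj p q) r) (disj p (disj q r)))
| Q9 p q r : axiom (Imp (Imp (Imp p One) (Imp (Imp q One) r))
                        (Imp (Imp q One) (Imp (Imp p One) r)))
| Q10 p : axiom (Imp p One).

Inductive prov : F -> Prop :=
| P_ax p : axiom p -> prov p
| P_qMP p q r : prov (Imp (Imp r r) p) -> prov (Imp (Imp r r) (Imp p q)) ->
                prov (Imp (Imp r r) q)
| P_Reg p r : prov p -> prov (Imp (Imp r r) p)
| P_AReg1 p q r : prov (Imp (Imp r r) (Imp p q)) -> prov (Imp p q)
| P_AReg2 p q r : prov (Imp (Imp r r) (Neg (Imp p q))) -> prov (Neg (Imp p q))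
| P_AReg3 r : prov (Imp (Imp r r) (Neg One)) -> prov (Neg One)
| P_AReg4 r : prov (Imp (Imp r r) One) -> prov One
| P_Inv1 p : prov p -> prov (Neg (Neg p))
| P_Inv2 p : prov (Neg (Neg p)) -> prov p
| P_Flat p : prov p -> prov (Neg One) -> prov (Neg p)
| P_R2 p q r t : prov (Imp p q) -> prov (Imp r t) -> prov (Imp (Imp q r) (Imp p t))
| P_R3 p r : prov (Imp (Imp r r) p) -> prov (minus p).

Definition prov_iff (p q : F) : Prop := prov (Imp p q) /\ prov (Imp q p).

(* One-hole contexts, for replacing one occurrence of a subformula. *)
Inductive ctx : Type :=
| Hole : ctx
| CImpL : ctx -> F -> ctx
| CImpR : F -> ctx -> ctx
| CNeg : ctx -> ctx.

Fixpoint fill (c : ctx) (s : F) : F :=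
  match c with
  | Hole => s
  | CImpL c q => Imp (fill c s) q
  | CImpR p c => Imp p (fill c s)
  | CNeg c => Neg (fill c s)
  end.

End Sq.

Arguments plus {V} _.
Arguments minus {V} _.
Arguments disj {V} _ _.
Arguments axiom {V} _.
Arguments prov {V} _.
Arguments prov_iff {V} _ _.
Arguments Hole {V}.
Arguments CImpL {V} _ _.
Arguments CImpR {V} _ _.
Arguments CNeg {V} _.
Arguments fill {V} _ _.


(* Reg followed by AReg1 turns qMP into modus ponens under an implication,
   and R2' makes [->] monotone in both arguments, so derivable equivalence is
   a congruence.  Q3 lets every formula [p] be read as the implication
   [(q -> q) -> p]: applying R2' to the two halves of Q3 and stripping the
   antecedent with AReg1 gives [p -> p], and Q5 applied twice gives double
   negation for implications, hence for all formulas.  Commutativity of the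
   disjunction is Q7 with the trivial antecedent [1 -> 1]. *)

Section Derivations.
Variable V : Type.
Notation F := (form V).

Lemma prov_imp_refl (p : F) : prov (Imp p p).
Proof.
  pose (X := Imp (Imp One One) p).
  apply (P_AReg1 _ _ _ X).
  apply P_R2; apply P_ax; [apply Q3a | apply Q3b].
Qed.

Lemma prov_mp_imp (a b c : F) :
  prov a -> prov (Imp a (Imp b c)) -> prov (Imp b c).
Proof.
  intros Ha Habc.
  apply (P_AReg1 _ _ _ One).
  apply (P_qMP _ a); apply P_Reg; assumption.
Qed.

Lemma prov_imp_trans (a b c : F) :
  prov (Imp a b) -> prov (Imp b c) -> prov (Imp a c).
Proof.
  intros Hab Hbc.
  apply (prov_mp_imp (Imp b c)); [assumption |].
  apply P_R2; [assumption | apply prov_imp_refl].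
Qed.

Lemma prov_contra (p q : F) : prov (Imp p q) -> prov (Imp (Neg q) (Neg p)).
Proof.
  intros Hpq.
  apply (prov_mp_imp (Imp p q)); [assumption |].
  apply P_ax, Q1a.
Qed.

Lemma prov_iff_refl (p : F) : prov_iff p p.
Proof. split; apply prov_imp_refl. Qed.

Lemma prov_iff_sym (p q : F) : prov_iff p q -> prov_iff q p.
Proof. intros [Hpq Hqp]; split; assumption. Qed.

Lemma prov_iff_trans (p q r : F) :
  prov_iff p q -> prov_iff q r -> prov_iff p r.
Proof. intros [] []; split; eapply prov_imp_trans; eassumption. Qed.

Lemma prov_iff_Neg (p q : F) : prov_iff p q -> prov_iff (Neg p) (Neg q).
Proof. intros [Hpq Hqp]; split; apply prov_contra; assumption. Qed.

Lemma prov_iff_Imp (p q r t : F) :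
  prov_iff p q -> prov_iff r t -> prov_iff (Imp p r) (Imp q t).
Proof. intros [] []; split; apply P_R2; assumption. Qed.

Lemma prov_iff_fill (c : ctx V) (p1 r1 : F) :
  prov_iff p1 r1 -> prov_iff (fill c p1) (fill c r1).
Proof.
  intros H; induction c as [| c IHc q | q c IHc | c IHc]; simpl.
  - exact H.
  - exact (prov_iff_Imp _ _ _ _ IHc (prov_iff_refl q)).
  - exact (prov_iff_Imp _ _ _ _ (prov_iff_refl q) IHc).
  - exact (prov_iff_Neg _ _ IHc).
Qed.

Lemma prov_iff_plus (p q : F) : prov_iff p q -> prov_iff (plus p) (plus q).
Proof.
  intros H; unfold plus.
  apply prov_iff_Imp; [apply prov_iff_Imp |]; auto using prov_iff_refl.
Qed.

Lemma prov_iff_minus (p q : F) : prov_iff p q -> prov_iff (minus p) (minus q).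
Proof.
  intros H; unfold minus.
  apply prov_iff_Imp; [apply prov_iff_Imp |]; auto using prov_iff_refl.
Qed.

Lemma prov_iff_disj (p q p' q' : F) :
  prov_iff p p' -> prov_iff q q' -> prov_iff (disj p q) (disj p' q').
Proof.
  intros Hp Hq; unfold disj.
  auto 10 using prov_iff_Imp, prov_iff_plus, prov_iff_minus, prov_iff_Neg.
Qed.

Lemma Imp_refl_iff (p q : F) : prov_iff (Imp p p) (Imp q q).
Proof. split; apply P_Reg, prov_imp_refl. Qed.

Lemma Imp_refl_antecedent_iff (p q : F) : prov_iff p (Imp (Imp q q) p).
Proof. split; apply P_ax; constructor. Qed.

Lemma Neg_Imp_iff_swap (p q : F) : prov_iff (Neg (Imp p q)) (Imp q p).
Proof. split; apply P_ax; constructor. Qed.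

Lemma Neg_Imp_iff (p q : F) : prov_iff (Neg (Imp p q)) (Imp (Neg p) (Neg q)).
Proof.
  split.
  - eapply prov_imp_trans; [apply P_ax, Q5a | apply P_ax, Q1a].
  - eapply prov_imp_trans; [apply P_ax, Q1b | apply P_ax, Q5b].
Qed.

Lemma Neg_Neg_Imp_iff (p q : F) : prov_iff (Neg (Neg (Imp p q))) (Imp p q).
Proof.
  eapply prov_iff_trans; [apply prov_iff_Neg, Neg_Imp_iff_swap |].
  apply Neg_Imp_iff_swap.
Qed.

Lemma Neg_Neg_iff (p : F) : prov_iff p (Neg (Neg p)).
Proof.
  pose proof (Imp_refl_antecedent_iff p One) as Hp.
  eapply prov_iff_trans; [exact Hp |].
  eapply prov_iff_trans; [apply prov_iff_sym, Neg_Neg_Imp_iff |].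
  apply prov_iff_Neg, prov_iff_Neg, prov_iff_sym, Hp.
Qed.

Lemma Imp_Neg_swap_iff (p q : F) :
  prov_iff (Imp (Neg p) q) (Imp (Neg q) p).
Proof.
  assert (Hcontra : prov_iff (Imp (Neg p) q) (Imp (Neg q) (Neg (Neg p))))
    by (split; apply P_ax; [apply Q1a | apply Q1b]).
  eapply prov_iff_trans; [exact Hcontra |].
  apply prov_iff_Imp; [apply prov_iff_refl | apply prov_iff_sym, Neg_Neg_iff].
Qed.

Lemma plus_Neg_iff (p : F) : prov_iff (plus (Neg p)) (Neg (minus p)).
Proof.
  unfold plus, minus; apply prov_iff_sym.
  eapply prov_iff_trans; [apply Neg_Imp_iff |].
  apply prov_iff_Imp; [| apply prov_iff_sym, Neg_Neg_iff].
  eapply prov_iff_trans; [apply Neg_Imp_iff |].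
  apply prov_iff_Imp; [apply prov_iff_refl | apply prov_iff_sym, Neg_Neg_iff].
Qed.

Lemma minus_Neg_iff (p : F) : prov_iff (minus (Neg p)) (Neg (plus p)).
Proof.
  unfold plus, minus; apply prov_iff_sym.
  eapply prov_iff_trans; [apply Neg_Imp_iff |].
  apply prov_iff_Imp; [apply Neg_Imp_iff | apply prov_iff_refl].
Qed.

Lemma disj_comm_imp (p q : F) : prov (Imp (disj p q) (disj q p)).
Proof.
  pose (T := Imp (One : F) One).
  assert (Hdisj : prov_iff (disj (Imp T q) (Imp T p)) (disj q p))
    by (apply prov_iff_disj;
        exact (prov_iff_sym _ _ (Imp_refl_antecedent_iff _ _))).
  eapply prov_imp_trans; [apply P_ax, (Q3a _ _ One) |].
  eapply prov_imp_trans; [apply P_ax, Q7a |].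
  apply Hdisj.
Qed.

Lemma disj_comm_iff (p q : F) : prov_iff (disj p q) (disj q p).
Proof. split; apply disj_comm_imp. Qed.

End Derivations.

Theorem proposition4p1 (V : Type) :
  (* (1) *)
  (forall p q : form V, prov_iff p q -> prov_iff (Neg p) (Neg q)) /\
  (* (2) *)
  (forall p q r t : form V, prov_iff p q -> prov_iff r t ->
     prov_iff (Imp p r) (Imp q t)) /\
  (* (3) *)
  (forall p q r : form V, prov_iff p q -> prov_iff q r -> prov_iff p r) /\
  (* (4) *)
  (forall p q : form V, prov_iff (Neg (Imp p q)) (Imp (Neg p) (Neg q))) /\
  (* (5) *)
  (forall p : form V, prov (Imp p p)) /\
  (* (6) replacement of an occurrence of a subformula p1 (p = C[p1], r = C[r1]) *)
  (forall (c : ctx V) (p1 r1 : form V), prov_iff p1 r1 ->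
     prov_iff (fill c p1) (fill c r1)) /\
  (* (7) *)
  (forall p q : form V, prov_iff (Imp p p) (Imp q q)) /\
  (* (8) *)
  (forall p : form V, prov_iff p (Neg (Neg p))) /\
  (* (9) *)
  (forall p q : form V, prov_iff (Imp (Neg p) q) (Imp (Neg q) p)) /\
  (* (10) *)
  (forall p : form V, prov_iff (plus (Neg p)) (Neg (minus p)) /\
                      prov_iff (minus (Neg p)) (Neg (plus p))) /\
  (* (11) *)
  (forall p q : form V, prov_iff (disj p q) (disj q p)).
Proof.
  split; [exact (prov_iff_Neg V) |].
  split; [exact (prov_iff_Imp V) |].
  split; [exact (prov_iff_trans V) |].
  split; [exact (Neg_Imp_iff V) |].
  split; [exact (prov_imp_refl V) |].
  split; [exact (prov_iff_fill V) |].
  split; [exact (Imp_refl_iff V) |].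
  split; [exact (Neg_Neg_iff V) |].
  split; [exact (Imp_Neg_swap_iff V) |].
  split; [exact (fun p => conj (plus_Neg_iff V p) (minus_Neg_iff V p)) |].
  exact (disj_comm_iff V).
Qed.
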